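(* Let $d\in\mathbb{N}$ and $\xi=(\xi^0,\xi^1,\dots,\xi^d)\in\mathbb{C}^{d+1}$ with $\xi^j\neq\xi^k$ for $j\neq k$. Let $p:\mathbb{C}\to\mathbb{C}$ be a polynomial of degree $d$. Then \[ \|p\|_{T([-1,1])}=\sum_{j=0}^d\Big|\sum_{k=0}^dT(\xi)^j{}_k\,p(\xi^k)\Big|. \]
   Context: $T_m$ is the Chebyshev polynomial with $T_m(\cos z)=\cos(mz)$. For a nonzero polynomial $p$ of one variable, writing uniquely $p(x)=\sum_{j=0}^{\deg p}c_jT_j(x)$, $\|p\|_{T([-1,1])}:=\sum_{j=0}^{\deg p}|c_j|$. For $j,k\in\mathbb{N}_0$: $C^j{}_k:=0$ if $j>k$; for $j\le k$: $C^j{}_k:=2^{1-k}\binom{k}{\frac{k-1}{2}-\frac{j-1}{2}}$ if $k,j$ odd; $C^0{}_k:=2^{-k}\binom{k}{k/2}$ if $k$ even; $C^j{}_k:=2^{1-k}\binom{k}{\frac k2-\frac j2}$ if $k,j$ even and $j\ge2$; $C^j{}_k:=0$ otherwise. For $n\in\mathbb{N}$, $\eta=(\eta^1,\dots,\eta^n)\in\mathbb{C}^n$, $j\in\{0,\dots,n\}$, $k\in\{0,\dots,j\}$, define recursively $a_{j,0}(\eta):=\prod_{\ell=1}^j\eta^\ell$, $a_{j,k}(\eta):=a_{j-1,k-1}(\eta)+\eta^ja_{j-1,k}(\eta)$ for $1\le k\le j-1$, $a_{j,j}(\eta):=1$. For $k\in\{0,\dots,d\}$, let $\xi_{(k)}\in\mathbb{C}^d$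 be the vector obtained from $\xi$ by deleting the entry $\xi^k$ (remaining entries in their original order). Set $L(\xi)^j{}_k:=\frac{a_{d,j}(-\xi_{(k)})}{\prod_{\ell\in\{0,\dots,d\}\setminus\{k\}}(\xi^k-\xi^\ell)}$ and $T(\xi)^j{}_k:=\sum_{\ell=0}^dC^j{}_\ell L(\xi)^\ell{}_k$ for $j,k\in\{0,\dots,d\}$. *)

(* Complex numbers: an arbitrary numClosedFieldType C
   (covers the complex numbers, e.g. R[i] for R a real closed field). *)
From mathcomp Require Import all_boot all_order all_algebra.
Set Implicit Arguments. Unset Strict Implicit. Unset Printing Implicit Defensive.
Import Order.TTheory GRing.Theory Num.Theory.
Local Open Scope ring_scope.

Fixpoint chebT (C : numClosedFieldType) (n : nat) : {poly C} :=
  match n with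
  | 0 => 1
  | 1 => 'X
  | (m.+1 as n').+1 => 2%:P * 'X * chebT C n' - chebT C m
  end.

Definition cheb_expansion (C : numClosedFieldType) (p : {poly C})
  (c : 'I_(size p) -> C) : Prop :=
  p = \sum_(j < size p) c j *: chebT C j.

Definition Ccoef (C : numClosedFieldType) (j k : nat) : C :=
  if (k < j)%N then 0
  else if odd k && odd j then
    2 * 2 ^- k * ('C(k, (k.-1)./2 - (j.-1)./2))%:R
  else if ~~ odd k && (j == 0%N) then
    2 ^- k * ('C(k, k./2))%:R
  else if ~~ odd k && ~~ odd j && (2 <= j)%N then
    2 * 2 ^- k * ('C(k, k./2 - j./2))%:R
  else 0.

(* a_{j,k}(eta), eta = (eta^1, ..., eta^n) given as a function nat -> C
   (only indices 1..j are used); set to 0 for k > j (undefined in the paper). *)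
Fixpoint acoef (C : numClosedFieldType) (eta : nat -> C) (j k : nat) : C :=
  match j with
  | 0 => if k == 0%N then 1 else 0
  | j'.+1 =>
    if k == 0%N then \prod_(1 <= l < j'.+2) eta l
    else if k == j'.+1 then 1
    else if (k < j'.+1)%N then acoef eta j' k.-1 + eta j'.+1 * acoef eta j' k
    else 0
  end.

(* xi_(k): xi = (xi^0,...,xi^d) with entry xi^k deleted, re-indexed 1..d *)
Definition delete_entry (C : numClosedFieldType) (xi : nat -> C) (k : nat)
  : nat -> C :=
  fun l => if (l.-1 < k)%N then xi l.-1 else xi l.

Definition Lmat (C : numClosedFieldType) (d : nat) (xi : nat -> C) (j k : nat) : C :=
  acoef (fun l => - delete_entry xi k l) d j /
  \prod_(l < d.+1 | (l : nat) != k) (xi k - xi l).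

Definition Tmat (C : numClosedFieldType) (d : nat) (xi : nat -> C) (j k : nat) : C :=
  \sum_(l < d.+1) Ccoef C j l * Lmat d xi l k.

From mathcomp Require Import all_boot all_order all_algebra.
From mathcomp Require Import zify.
Import Order.TTheory GRing.Theory Num.Theory.
Set Implicit Arguments. Unset Strict Implicit.
Local Open Scope ring_scope.

(* Since (2X)^k = sum_i binom(k,i) T_|k-2i|, every monomial X^k equals
   sum_j C^j_k T_j, so the Chebyshev coefficients of p are c_j = sum_l C^j_l p_l;
   they are unique because T_j has degree exactly j.  On the other side,
   a_{d,j}(-xi_(k)) is the coefficient of X^j in prod_{l <> k} (X - xi^l), so the
   k-th column of L(xi) lists the coefficients of the k-th Lagrange basis
   polynomial, and Lagrange interpolation gives p_l = sum_k L(xi)^l_k p(xi^k).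
   Composing the two, c_j = sum_k T(xi)^j_k p(xi^k). *)

Lemma nat_ind2 (P : nat -> Prop) :
  P 0%N -> P 1%N -> (forall m, P m -> P m.+1 -> P m.+2) -> forall n, P n.
Proof.
move=> P0 P1 PSS n; suff [] : P n /\ P n.+1 by [].
by elim: n => [|n [Pn Pn1]]; split; last exact: PSS.
Qed.

Lemma sum_binS (M : zmodType) (f : nat -> M) k :
  \sum_(i < k.+2) f i *+ 'C(k.+1, i) = \sum_(i < k.+1) (f i + f i.+1) *+ 'C(k, i).
Proof.
rewrite big_ord_recl bin0 mulr1n.
under eq_bigr do rewrite /= binS mulrnDr.
under [RHS]eq_bigr do rewrite mulrnDl.
rewrite !big_split /= [in RHS]big_ord_recl bin0 mulr1n -!addrA; congr (_ + (_ + _)).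
by rewrite big_ord_recr /= bin_small // mulr0n addr0.
Qed.

Definition cheb_mult (k j : nat) : nat :=
  (\sum_(i < k.+1 | `|k%:Z - (2 * i)%N%:Z|%N == j) 'C(k, i))%N.

Lemma cheb_multE k j : cheb_mult k j =
  (if (j <= k) && ~~ odd (k + j)
   then (if j == 0 then 1 else 2) * 'C(k, (k - j)./2) else 0)%N.
Proof.
set a := ((k - j)./2)%N.
have mult_eq (i : 'I_k.+1) : (`|k%:Z - (2 * i)%N%:Z|%N == j) =
    [&& (j <= k)%N, ~~ odd (k + j) & ((i : nat) == a) || ((i : nat) == k - a)%N].
  have := ltn_ord i; rewrite /a => i_lt.
  apply/eqP/and3P => [abs_eq|[? ? /orP[] /eqP]]; try lia.
  by split; [lia|lia|apply/orP; lia].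
rewrite /cheb_mult (eq_bigl _ _ mult_eq).
case: ifP => [/andP[j_le_k k_j_even]|/negbT cond]; last first.
  by rewrite big_pred0 // => i; apply: contraNF cond => /and3P[-> ->].
have a_lt : (a < k.+1)%N by rewrite /a; lia.
have [j0|j_neq0] := eqVneq j 0%N.
  rewrite (eq_bigl (fun i : 'I_k.+1 => (i : nat) == a)) => [|i].
    by rewrite big_ord1_eq a_lt mul1n.
  by rewrite j_le_k k_j_even /=; rewrite /a j0; apply/orP/idP => [[]|->] //; lia.
have a_neq : a != (k - a)%N by apply/eqP; rewrite /a; lia.
rewrite big_mkcond (eq_bigr (fun i : 'I_k.+1 => (if (i : nat) == a then 'C(k, a) else 0)
  + (if (i : nat) == (k - a)%N then 'C(k, a) else 0))%N) => [|i _].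
  rewrite big_split -!big_mkcond /= !(big_ord1_eq _ (fun=> 'C(k, a))) a_lt.
  by rewrite ifT ?mul2n ?addnn // ltnS leq_subr.
rewrite j_le_k k_j_even /=.
have [->|i_neq_a] := eqVneq (i : nat) a; first by rewrite (negPf a_neq) addn0.
have [->|//] := eqVneq (i : nat) (k - a)%N.
by rewrite bin_sub // /a; lia.
Qed.

Section Chebyshev.
Variable C : numClosedFieldType.
Local Notation T := (chebT C).

Lemma chebTSS m : T m.+2 = 2%:P * 'X * T m.+1 - T m.
Proof. by []. Qed.

Lemma size_chebT n : size (T n) = n.+1.
Proof.
elim/nat_ind2: n => [||m IHm IH]; first by rewrite size_poly1.
  by rewrite size_polyX.
have T1_neq0 : T m.+1 != 0 by rewrite -size_poly_eq0 IH.
have size2XT : size (2%:P * 'X * T m.+1) = m.+3.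
  by rewrite -mulrA mul_polyC size_scale ?pnatr_eq0 // -commr_polyX size_mulX // IH.
by rewrite chebTSS size_polyDl size2XT // size_polyN IHm.
Qed.

Lemma chebT_free n (a : 'I_n -> C) :
  \sum_(j < n) a j *: T j = 0 -> forall j, a j = 0.
Proof.
elim: n a => [|n IH] a sum_eq0 j; first by case: j.
rewrite big_ord_recr /= in sum_eq0.
have a_max : a ord_max = 0.
  have /eqP := congr1 (fun q : {poly C} => q`_n) sum_eq0.
  rewrite coefD coef_sum coef0 big1 => [|i _]; last first.
    by rewrite coefZ nth_default ?mulr0 // size_chebT.
  have lead_neq0 : (T n)`_n != 0.
    have : lead_coef (T n) != 0 by rewrite lead_coef_eq0 -size_poly_eq0 size_chebT.
    by rewrite /lead_coef size_chebT.
  by rewrite add0r coefZ mulf_eq0 (negPf lead_neq0) orbF => /eqP.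
rewrite a_max scale0r addr0 in sum_eq0.
have [j_lt_n|j_ge_n] := ltnP j n.
  have -> : j = widen_ord (leqnSn n) (Ordinal j_lt_n) by exact: val_inj.
  exact: (IH (fun i => a (widen_ord (leqnSn n) i))).
suff -> : j = ord_max by [].
by apply/val_inj/eqP; rewrite eqn_leq j_ge_n -ltnS ltn_ord.
Qed.

(* With T_(-n) = T_n the recurrence 2X T_z = T_(z+1) + T_(z-1) also holds at z = 0. *)
Definition chebTz (z : int) : {poly C} := T `|z|%N.

Lemma mul2X_chebTz z : 2%:P * 'X * chebTz z = chebTz (z + 1) + chebTz (z - 1).
Proof.
rewrite /chebTz; case: z => [[|m]|m].
- by rewrite /= mulr1 polyC_natr mulr_natl mulr2n.
- have -> : `|(m.+1%:Z + 1)%R|%N = m.+2 by lia.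
  have -> : `|(m.+1%:Z - 1)%R|%N = m by lia.
  by rewrite chebTSS subrK.
- have -> : `|(Negz m + 1)%R|%N = m by lia.
  have -> : `|(Negz m - 1)%R|%N = m.+2 by lia.
  by rewrite chebTSS addrC subrK.
Qed.

Lemma exp2X_chebTz k :
  (2%:P * 'X) ^+ k = \sum_(i < k.+1) chebTz (k%:Z - (2 * i)%N%:Z) *+ 'C(k, i).
Proof.
elim: k => [|k IH]; first by rewrite expr0 big_ord1 mulr1n.
rewrite exprS IH mulr_sumr.
under eq_bigr do rewrite mulrnAr mul2X_chebTz.
rewrite (sum_binS (fun i => chebTz (k.+1%:Z - (2 * i)%N%:Z))).
by apply: eq_bigr => i _; congr ((chebTz _ + chebTz _) *+ _); lia.
Qed.

Lemma exp2X_chebT k : (2%:P * 'X) ^+ k = \sum_(j < k.+1) T j *+ cheb_mult k j.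
Proof.
rewrite exp2X_chebTz /cheb_mult; symmetry.
under eq_bigr do rewrite -sumrMnr big_mkcond /=.
rewrite exchange_big /=; apply: eq_bigr => i _.
rewrite -big_mkcond /=.
rewrite (eq_bigl (fun j : 'I_k.+1 => (j : nat) == `|k%:Z - (2 * i)%N%:Z|%N)).
  by rewrite (big_ord1_eq _ (fun j => T j *+ 'C(k, i))) ifT //; have := ltn_ord i; lia.
by move=> j; rewrite eq_sym.
Qed.

Lemma Ccoef_cheb_mult k j : Ccoef C j k = (cheb_mult k j)%:R / 2 ^+ k.
Proof.
rewrite cheb_multE /Ccoef; case: ltnP => [k_lt_j|j_le_k] /=.
  by rewrite mul0r.
case ok: (odd k); case oj: (odd j) => /=.
- rewrite ifT; last by lia.
  rewrite ifF; last by lia.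
  have -> : ((k.-1)./2 - (j.-1)./2 = (k - j)./2)%N by lia.
  by rewrite natrM mulrAC.
- by rewrite ifF ?mul0r //; apply/negbTE; lia.
- have -> : (j == 0%N) = false by apply/negbTE/eqP; lia.
  by rewrite ifF ?mul0r //; apply/negbTE; lia.
- rewrite [in RHS]ifT; last by lia.
  have [->|j_neq0] := eqVneq j 0%N; first by rewrite subn0 mul1n mulrC.
  rewrite ifT; last by lia.
  have -> : (k./2 - j./2 = (k - j)./2)%N by lia.
  by rewrite natrM mulrAC.
Qed.

Lemma polyXn_chebT k : 'X^k = \sum_(j < k.+1) Ccoef C j k *: T j.
Proof.
have two_k_neq0 : (2 : C) ^+ k != 0 by rewrite expf_neq0 // pnatr_eq0.
apply: (scalerI two_k_neq0).
rewrite -mul_polyC polyC_exp -exprMn_comm; last exact: commr_polyX.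
rewrite exp2X_chebT scaler_sumr; apply: eq_bigr => j _.
by rewrite Ccoef_cheb_mult scalerA mulrC divfK // scaler_nat.
Qed.

Lemma polyXn_chebT_widen k n :
  (k < n)%N -> 'X^k = \sum_(j < n) Ccoef C j k *: T j.
Proof.
move=> k_lt_n; rewrite polyXn_chebT.
rewrite (big_ord_widen n (fun j => Ccoef C j k *: T j) k_lt_n) big_mkcond.
apply: eq_bigr => j _; case: ltnP => // k_lt_j.
by rewrite /Ccoef k_lt_j scale0r.
Qed.

Definition cheb_coef (p : {poly C}) (j : nat) : C :=
  \sum_(l < size p) Ccoef C j l * p`_l.

Lemma chebT_expansion (p : {poly C}) :
  p = \sum_(j < size p) cheb_coef p j *: T j.
Proof.
rewrite -[p in LHS]coefK poly_def.
under eq_bigr do rewrite (polyXn_chebT_widen (ltn_ord _)) scaler_sumr.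
rewrite exchange_big /=; apply: eq_bigr => j _.
by rewrite /cheb_coef scaler_suml; apply: eq_bigr => l _; rewrite scalerA mulrC.
Qed.

Lemma cheb_expansion_unique (p : {poly C}) (c : 'I_(size p) -> C) :
  cheb_expansion c -> forall j, c j = cheb_coef p j.
Proof.
move=> c_exp j; apply/eqP; rewrite -subr_eq0; apply/eqP; move: j.
apply: chebT_free; under eq_bigr do rewrite scalerBl.
by rewrite sumrB -c_exp -chebT_expansion subrr.
Qed.

End Chebyshev.

Lemma big_neq_lift (R : Type) (idx : R) (op : Monoid.com_law idx) n (k : 'I_n.+1)
    (F : 'I_n.+1 -> R) :
  \big[op/idx]_(l < n.+1 | l != k) F l = \big[op/idx]_(m < n) F (lift k m).
Proof.
rewrite (reindex_omap (lift k) (unlift k)) /=.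
  by apply: eq_bigl => m; rewrite eq_sym neq_lift liftK eqxx.
by move=> l; case: unliftP => [m ->|->]; rewrite ?eqxx.
Qed.

Section Lagrange.
Variables (F : fieldType) (d : nat) (x : nat -> F).
Hypothesis x_inj : forall j k : nat, (j <= d)%N -> (k <= d)%N -> j != k -> x j != x k.

Definition lagrange_num (k : 'I_d.+1) : {poly F} :=
  \prod_(l < d.+1 | l != k) ('X - (x l)%:P).

Definition lagrange_basis (k : 'I_d.+1) : {poly F} :=
  (\prod_(l < d.+1 | l != k) (x k - x l))^-1 *: lagrange_num k.

Lemma size_lagrange_basis k : (size (lagrange_basis k) <= d.+1)%N.
Proof.
rewrite (leq_trans (size_scale_leq _ _)) // /lagrange_num.
rewrite big_neq_lift size_prod_XsubC.
by rewrite [index_enum _]unlock -enumT size_enum_ord.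
Qed.

Lemma x_ord_inj : injective (fun k : 'I_d.+1 => x k).
Proof.
by move=> j k; apply: contra_eq; apply: x_inj (ltn_ord j) (ltn_ord k).
Qed.

Lemma horner_lagrange_num k y :
  (lagrange_num k).[y] = \prod_(l < d.+1 | l != k) (y - x l).
Proof. by rewrite horner_prod; under eq_bigr do rewrite hornerXsubC. Qed.

Lemma lagrange_basis_eval (k t : 'I_d.+1) : (lagrange_basis k).[x t] = (t == k)%:R.
Proof.
rewrite hornerZ horner_lagrange_num.
have [->|t_neq_k] := eqVneq t k.
  apply: mulVf; apply/prodf_neq0 => l l_neq_k.
  by rewrite subr_eq0 (inj_eq x_ord_inj) eq_sym.
by rewrite [X in _ * X](bigD1 t) //= subrr mul0r mulr0.
Qed.

Lemma lagrange_interpolation (p : {poly F}) : (size p <= d.+1)%N ->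
  p = \sum_(k < d.+1) p.[x k] *: lagrange_basis k.
Proof.
move=> size_p; apply/eqP; rewrite -subr_eq0; apply/eqP.
apply: (roots_geq_poly_eq0 (rs := [seq x k | k : 'I_d.+1])).
- apply/allP => _ /mapP[t _ ->]; rewrite /root hornerD hornerN horner_sum.
  under eq_bigr do rewrite hornerZ lagrange_basis_eval.
  rewrite (bigD1 t) //= eqxx mulr1 big1 ?addr0 ?subrr // => k.
  by rewrite eq_sym => /negPf ->; rewrite mulr0.
- by rewrite map_inj_uniq ?enum_uniq //; apply: x_ord_inj.
- rewrite size_map size_enum_ord (leq_trans (size_polyD _ _)) //.
  rewrite geq_max size_p size_polyN.
  by apply: (leq_trans (size_sum _ _ _)); apply/bigmax_leqP => k _;
     rewrite (leq_trans (size_scale_leq _ _)) ?size_lagrange_basis.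
Qed.

Lemma coef_lagrange_interpolation (p : {poly F}) l : (size p <= d.+1)%N ->
  p`_l = \sum_(k < d.+1) (lagrange_basis k)`_l * p.[x k].
Proof.
move=> size_p; rewrite [p in LHS](lagrange_interpolation size_p) coef_sum.
by apply: eq_bigr => k _; rewrite coefZ mulrC.
Qed.

End Lagrange.

Section PaperMatrices.
Variable C : numClosedFieldType.

Lemma acoef_0 (eta : nat -> C) j : acoef eta j 0 = \prod_(1 <= l < j.+1) eta l.
Proof. by case: j => [|j] //=; rewrite big_geq. Qed.

Lemma acoef_id (eta : nat -> C) j : acoef eta j j = 1.
Proof. by case: j => [|j] //=; rewrite eqxx. Qed.

Lemma acoef_small (eta : nat -> C) j k : (j < k)%N -> acoef eta j k = 0.
Proof.
case: j => [|j] /= j_lt_k; first by case: k j_lt_k.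
by rewrite !ifF //; apply/negbTE; lia.
Qed.

Lemma acoef_prod (eta : nat -> C) j k :
  acoef eta j k = (\prod_(m < j) ('X + (eta m.+1)%:P))`_k.
Proof.
elim: j k => [|j IH] k; first by rewrite big_ord0 coef1; case: k.
rewrite big_ord_recr /= mulrDr coefD coefMX coefMC -!IH.
have [->|k_neq0] := eqVneq k 0%N.
  by rewrite add0r acoef_0 big_nat_recr //= mulrC.
have [->|k_neq] := eqVneq k j.+1; first by rewrite acoef_id acoef_small ?mul0r ?addr0.
case: ltnP => k_le; first by rewrite mulrC.
by rewrite !acoef_small ?mul0r ?addr0 //; lia.
Qed.

Lemma Lmat_lagrange_basis d (xi : nat -> C) (k : 'I_d.+1) j :
  Lmat d xi j k = (lagrange_basis xi k)`_j.
Proof.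
rewrite /Lmat /lagrange_basis coefZ mulrC /lagrange_num !big_neq_lift acoef_prod.
congr (_ * _); apply/(congr1 (fun q : {poly C} => q`_j))/eq_bigr => m _.
by rewrite /delete_entry polyCN /= /bump; case: ltnP; rewrite ?add0n ?add1n.
Qed.

Lemma cheb_coef_Tmat d (xi : nat -> C)
    (hxi : forall j k : nat, (j <= d)%N -> (k <= d)%N -> j != k -> xi j != xi k)
    (p : {poly C}) j :
  size p = d.+1 -> cheb_coef p j = \sum_(k < d.+1) Tmat d xi j k * p.[xi k].
Proof.
move=> size_p; under [RHS]eq_bigr do rewrite /Tmat mulr_suml.
rewrite /cheb_coef exchange_big size_p; apply: eq_bigr => l _.
rewrite (coef_lagrange_interpolation hxi) ?size_p // mulr_sumr.
by apply: eq_bigr => k _; rewrite mulrA Lmat_lagrange_basis.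
Qed.

End PaperMatrices.

Theorem lemma5p16 (C : numClosedFieldType) (d : nat) (xi : nat -> C)
  (hxi : forall j k : nat, (j <= d)%N -> (k <= d)%N -> j != k -> xi j != xi k)
  (p : {poly C}) (hp : size p = d.+1) :
  (exists c : 'I_(size p) -> C, cheb_expansion c) /\
  (forall c : 'I_(size p) -> C, cheb_expansion c ->
     \sum_(j < size p) `|c j| =
     \sum_(j < d.+1) `| \sum_(k < d.+1) Tmat d xi j k * p.[xi k] |).
Proof.
split; first by exists (cheb_coef p); exact: chebT_expansion.
move=> c c_exp; under eq_bigr do rewrite (cheb_expansion_unique c_exp).
rewrite -(big_mkord xpredT (fun j => `|cheb_coef p j|)) hp big_mkord.
by apply: eq_bigr => j _; rewrite (cheb_coef_Tmat hxi).
Qed.
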